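(* Let $k\ge 2$ and let $K_{n_1,\ldots,n_k}$ be the complete $k$-partite graph with parts $V_1,\ldots,V_k$ and vertex set $V=V_1\cup\cdots\cup V_k$, where $n_i=|V_i|\ge 2$ for all $1\le i\le k$. Then the diameter of the 1-skeleton of $\mathrm{CUT}(K_{n_1,\ldots,n_k})$ equals $2$.
   Context: For an undirected graph $G=(V,E)$ and $S\subseteq V$, $\delta(S)\subseteq E$ denotes the set of edges with exactly one endpoint in $S$, and $\mathbf v(S)\in\{0,1\}^{E}$ is its incidence vector ($v(S)_e=1$ iff $e\in\delta(S)$). The cut polytope is $\mathrm{CUT}(G)=\operatorname{conv}\{\mathbf v(S):S\subseteq V\}\subset\mathbb R^{E}$. The 1-skeleton of a polytope is the graph whose vertices are the polytope's vertices and whose edges are its one-dimensional faces; the diameter is the maximum shortest-path edge distance between two vertices of this graph. *)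

From HB Require Import structures.
From mathcomp Require Import all_boot all_order all_algebra.
From mathcomp Require Import reals.
Set Implicit Arguments. Unset Strict Implicit. Unset Printing Implicit Defensive.
Import Order.TTheory GRing.Theory Num.Theory.
Local Open Scope ring_scope.

Section Cut.
Variable V : finType.
(* a simple graph on V, given by its adjacency relation (only pairs u != v
   with adj u v count as edges) *)
Variable adj : rel V.

Definition is_edge (e : {set V}) : bool :=
  [exists u, exists v, [&& u != v, adj u v & e == [set u; v]]].

Definition edge := {e : {set V} | is_edge e}.

Variable R : realType.

Definition cutvec (S : {set V}) : edge -> R :=
  fun e => if #|val e :&: S| == 1%N then 1 else 0.
End Cut.

Section Polytope.
Variables (E : finType) (R : realType).

Definition dotp (c x : E -> R) : R := \sum_e c e * x e.

Definition conv (I : finType) (f : I -> E -> R) (x : E -> R) : Prop :=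
  exists w : I -> R, (forall i, 0 <= w i) /\ \sum_i w i = 1 /\
    forall e, x e = \sum_i w i * f i e.

Definition is_face (P F : (E -> R) -> Prop) : Prop :=
  exists (c : E -> R) (d : R), (forall x, P x -> dotp c x <= d) /\
    forall x, F x <-> (P x /\ dotp c x = d).

Definition is_vertex (P : (E -> R) -> Prop) (p : E -> R) : Prop :=
  is_face P (fun x => x = p).

Definition segment (u v : E -> R) (x : E -> R) : Prop :=
  exists t : R, 0 <= t <= 1 /\ forall e, x e = (1 - t) * u e + t * v e.

Definition skel_adj (P : (E -> R) -> Prop) (u v : E -> R) : Prop :=
  is_vertex P u /\ is_vertex P v /\ u <> v /\ is_face P (segment u v).

Fixpoint skel_within (P : (E -> R) -> Prop) (m : nat) (u v : E -> R) : Prop :=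
  match m with
  | 0 => u = v
  | m'.+1 => skel_within P m' u v \/
             exists w, skel_within P m' u w /\ skel_adj P w v
  end.

Definition skeleton_diameter (P : (E -> R) -> Prop) (d : nat) : Prop :=
  (forall u v, is_vertex P u -> is_vertex P v -> skel_within P d u v) /\
  (exists u v, is_vertex P u /\ is_vertex P v /\
     forall m, (m < d)%N -> ~ skel_within P m u v).
End Polytope.

Definition CUT (V : finType) (adj : rel V) (R : realType) :
  (edge adj -> R) -> Prop :=
  conv (fun S : {set V} => @cutvec V adj R S).

(* complete k-partite graph K_{n_1,...,n_k}: vertex (i, a) lies in part V_i *)
Definition mpvert (k : nat) (n : 'I_k -> nat) : finType := {i : 'I_k & 'I_(n i)}.

Definition multipartite (k : nat) (n : 'I_k -> nat) : rel (mpvert n) :=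
  fun u v => tag u != tag v.

Arguments CUT {V} adj R.
Arguments multipartite : clear implicits.

(* Two cut vectors v(S), v(T)
   span an edge as soon as both S Δ T and its complement induce connected
   subgraphs: the linear functional rewarding agreement with v(S) on the
   edges outside the cut of S Δ T is maximised over the cut vectors exactly
   by v(S) and v(T).  In K_{n_1,...,n_k} a disconnected induced subgraph with
   two or more vertices lies inside one part, and for such S Δ T a set A made
   of one vertex of that part and one vertex of another part gives the path
   v(S) - v(S Δ A) - v(T).  Conversely, for a part V_i the identity
   v(∅) + v(V_i) = v({a}) + v(V_i \ {a}) puts v({a}) on any face containing
   the segment [v(∅), v(V_i)], yet v({a}) is not on that segment. *)

From HB Require Import structures.
From mathcomp Require Import all_boot all_order all_algebra.
From mathcomp Require Import reals.
From mathcomp Require Import lra.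
From Stdlib Require Import FunctionalExtensionality.
Set Implicit Arguments. Unset Strict Implicit. Unset Printing Implicit Defensive.
Import Order.TTheory GRing.Theory Num.Theory.
Local Open Scope ring_scope.

Section ConvexHull.
Variables (E I : finType) (R : realType) (f : I -> E -> R).

Lemma sumr_delta (F : I -> R) i0 : \sum_i (i == i0)%:R * F i = F i0.
Proof.
under eq_bigr do rewrite mulr_natl mulrb.
by rewrite -big_mkcond big_pred1_eq.
Qed.

Lemma dotp_conv c w x : (forall e, x e = \sum_i w i * f i e) ->
  dotp c x = \sum_i w i * dotp c (f i).
Proof.
move=> xE; rewrite /dotp.
under eq_bigr do rewrite xE mulr_sumr.
rewrite exchange_big; apply: eq_bigr => i _.
by rewrite mulr_sumr; apply: eq_bigr => e _; rewrite mulrCA.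
Qed.

Lemma conv_point i0 : conv f (f i0).
Proof.
exists (fun i => (i == i0)%:R); split=> [i|]; first exact: ler0n.
split=> [|e]; last by rewrite sumr_delta.
by under eq_bigr do rewrite -[_%:R]mulr1; rewrite sumr_delta.
Qed.

Section SupportingHyperplane.
Variables (c : E -> R) (d : R).
Hypothesis valid : forall i, dotp c (f i) <= d.

Lemma conv_le x : conv f x -> dotp c x <= d.
Proof.
move=> [w [w_ge0 [w1 xE]]]; rewrite (dotp_conv c xE).
apply: le_trans (_ : \sum_i w i * d <= d); first by apply: ler_sum => i _; apply: ler_wpM2l.
by rewrite -mulr_suml w1 mul1r.
Qed.

Lemma conv_weight_tight w x : (forall i, 0 <= w i) -> \sum_i w i = 1 ->
  (forall e, x e = \sum_i w i * f i e) -> dotp c x = d ->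
  forall i, w i != 0 -> dotp c (f i) = d.
Proof.
move=> w_ge0 w1 xE cx i wi_neq0.
have slack0 : \sum_j w j * (d - dotp c (f j)) = 0.
  under eq_bigr do rewrite mulrBr.
  by rewrite sumrB -mulr_suml w1 mul1r -(dotp_conv c xE) cx subrr.
have slack_ge0 j : xpredT j -> 0 <= w j * (d - dotp c (f j)).
  by move=> _; apply: mulr_ge0; rewrite ?subr_ge0.
move: (psumr_eq0P slack_ge0 slack0 (i := i) isT) => /eqP.
by rewrite mulf_eq0 (negbTE wi_neq0) subr_eq0 => /eqP.
Qed.

Lemma is_vertex_conv i0 : dotp c (f i0) = d ->
  (forall i, dotp c (f i) = d -> f i = f i0) -> is_vertex (conv f) (f i0).
Proof.
move=> tight0 tightE; exists c, d; split=> [|x]; first exact: conv_le.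
split=> [->|[[w [w_ge0 [w1 xE]]] cx]]; first by split=> //; apply: conv_point.
apply: functional_extensionality => e; rewrite xE.
transitivity (\sum_i w i * f i0 e); last by rewrite -mulr_suml w1 mul1r.
apply: eq_bigr => i _; have [->|wi_neq0] := eqVneq (w i) 0; first by rewrite !mul0r.
by rewrite tightE // (conv_weight_tight w_ge0 w1 xE cx wi_neq0).
Qed.

Lemma is_face_segment_conv i0 i1 : dotp c (f i0) = d -> dotp c (f i1) = d ->
  (forall i, dotp c (f i) = d -> f i = f i0 \/ f i = f i1) ->
  is_face (conv f) (segment (f i0) (f i1)).
Proof.
move=> tight0 tight1 tightE; exists c, d; split=> [|x]; first exact: conv_le.
split=> [[t [/andP[t_ge0 t_le1] xE]]|[[w [w_ge0 [w1 xE]]] cx]].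
  pose w i := (1 - t) * (i == i0)%:R + t * (i == i1)%:R.
  have sum_wf (g : I -> R) : \sum_i w i * g i = (1 - t) * g i0 + t * g i1.
    under eq_bigr do rewrite mulrDl -!mulrA.
    by rewrite big_split -!mulr_sumr !sumr_delta.
  have xE' e : x e = \sum_i w i * f i e by rewrite xE sum_wf.
  split.
    exists w; split=> [i|]; last split=> //.
      by apply: addr_ge0; apply: mulr_ge0; rewrite ?subr_ge0 ?ler0n.
    under eq_bigr do rewrite -[w _]mulr1.
    by rewrite sum_wf; lra.
  by rewrite (dotp_conv c xE') sum_wf tight0 tight1; lra.
pose on1 i := [forall e, f i e == f i1 e].
pose t := \sum_(i | on1 i) w i.
have t_ge0 : 0 <= t by apply: sumr_ge0.
have t'_ge0 : 0 <= \sum_(i | ~~ on1 i) w i by apply: sumr_ge0.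
have t'E : \sum_(i | ~~ on1 i) w i = 1 - t.
  by rewrite -w1 [in RHS](bigID on1) /= /t addrAC subrr add0r.
exists t; split; first by apply/andP; split; lra.
move=> e; rewrite xE (bigID on1) /= addrC -t'E !mulr_suml.
congr (_ + _); apply: eq_bigr => i on1i.
  have [->|wi_neq0] := eqVneq (w i) 0; first by rewrite !mul0r.
  have /tightE [-> //|fi1] := conv_weight_tight w_ge0 w1 xE cx wi_neq0.
  by case/negP: on1i; apply/forallP => e'; rewrite fi1.
by move/forallP/(_ e)/eqP: on1i => ->.
Qed.

End SupportingHyperplane.

Lemma vertex_conv_image p : is_vertex (conv f) p -> exists i, p = f i.
Proof.
move=> [c [d [valid faceE]]].
have [[w [w_ge0 [w1 pE]]] cp] := (faceE p).1 erefl.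
have valid_f i : dotp c (f i) <= d by apply/valid/conv_point.
have [i /andP[_ /lt0r_neq0 wi_neq0]] : exists i, true && (0 < w i).
  by apply: psumr_neq0P => [i _ //|]; rewrite w1; apply/eqP/oner_neq0.
exists i; apply/esym/faceE; split; first exact: conv_point.
exact: (conv_weight_tight valid_f w_ge0 w1 pE cp wi_neq0).
Qed.

End ConvexHull.

Section Skeleton.
Variables (E : finType) (R : realType).
Implicit Types (u v x y : E -> R) (P F : (E -> R) -> Prop).

Lemma segment_left u v : segment u v u.
Proof. by exists 0; rewrite lexx ler01; split=> // e; rewrite subr0 mul1r mul0r addr0. Qed.

Lemma segment_right u v : segment u v v.
Proof. by exists 1; rewrite lexx ler01; split=> // e; rewrite subrr mul0r mul1r add0r. Qed.

Lemma face_sum_closed P F x y u v : is_face P F -> P x -> P y -> F u -> F v ->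
  (forall e, x e + y e = u e + v e) -> F x.
Proof.
move=> [c [d [valid faceE]]] Px Py /faceE[_ cu] /faceE[_ cv] xyE.
have cxy : dotp c x + dotp c y = dotp c u + dotp c v.
  by rewrite /dotp -!big_split /=; apply: eq_bigr => e _; rewrite -!mulrDr xyE.
apply/faceE; split=> //.
by have := valid x Px; have := valid y Py; rewrite cu cv in cxy; lra.
Qed.

Lemma skel_within1_trans P u w v :
  skel_within P 1 u w -> skel_within P 1 w v -> skel_within P 2 u v.
Proof.
by move=> uw [<-|[w' [<- wv]]]; [left | right; exists w].
Qed.

End Skeleton.

Section SymmetricDifference.
Variable T : finType.
Implicit Types A B C : {set T}.

Definition symdiff A B : {set T} := [set x | (x \in A) != (x \in B)].

Lemma in_symdiff x A B : (x \in symdiff A B) = ((x \in A) != (x \in B)).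
Proof. by rewrite inE. Qed.

Lemma symdiffC A B : symdiff A B = symdiff B A.
Proof. by apply/setP => x; rewrite !inE; case: (x \in A); case: (x \in B). Qed.

Lemma symdiffA A B C : symdiff A (symdiff B C) = symdiff (symdiff A B) C.
Proof.
by apply/setP => x; rewrite !inE; case: (x \in A); case: (x \in B); case: (x \in C).
Qed.

Lemma symdiffKl A B : symdiff A (symdiff A B) = B.
Proof. by apply/setP => x; rewrite !inE; case: (x \in A); case: (x \in B). Qed.

Lemma symdiff_setCr A B : symdiff A (~: B) = ~: symdiff A B.
Proof. by apply/setP => x; rewrite !inE; case: (x \in A); case: (x \in B). Qed.

(* The conclusion says that [Y] is [set0], [setT], [U] or [~: U]. *)
Lemma sides_constant (U Y : {set T}) :
  (forall p q, (p \in U) = (q \in U) -> (p \in Y) = (q \in Y)) ->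
  (forall p q, (p \in Y) = (q \in Y)) \/
  (forall p q, ((p \in Y) != (q \in Y)) = ((p \in U) != (q \in U))).
Proof.
move=> sideY.
case: (boolP [exists r, exists r', (r \in Y) != (r' \in Y)]) => [|/existsPn constY].
  case/existsP=> r /existsP[r' rr'Y]; right.
  have rr'U : (r \in U) != (r' \in U) by apply: contra rr'Y => /eqP/sideY->.
  have YE p : (p \in Y) = ((r \in Y) != ((p \in U) != (r \in U))).
    have [prU|prU] := eqVneq (p \in U) (r \in U); first by rewrite (sideY _ _ prU); case: (r \in Y).
    have pr'U : (p \in U) = (r' \in U) by move: prU rr'U; do 3 case: (_ \in U).
    by rewrite (sideY _ _ pr'U); move: rr'Y; case: (r \in Y); case: (r' \in Y).
  move=> p q; rewrite (YE p) (YE q).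
  by case: (r \in Y); case: (p \in U); case: (q \in U); case: (r \in U).
by left=> p q; apply/eqP; move/existsPn/(_ q): (constY p); rewrite negbK.
Qed.

Lemma card_set2I (p q : T) S : p != q -> #|[set p; q] :&: S| = ((p \in S) + (q \in S))%N.
Proof.
move=> pq; rewrite -sum1_card (eq_bigl (fun x => (x \in [set p; q]) && (x \in S))).
  by rewrite big_mkcondr big_setU1 ?big_set1 ?inE //=; case: (p \in S); case: (q \in S).
by move=> x; rewrite inE.
Qed.

End SymmetricDifference.

Section CutVectors.
Variables (V : finType) (adj : rel V) (R : realType).
Local Notation E := (edge adj).
Local Notation cv S := (@cutvec V adj R S).
Implicit Types (S T U X Y : {set V}) (e : E).

Definition crosses S e : bool := #|val e :&: S| == 1%N.

Lemma cutvecE S e : cv S e = (crosses S e)%:R.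
Proof. by rewrite /cutvec /crosses; case: ifP. Qed.

Lemma cutvec_eqP S T : cv S = cv T <-> crosses S =1 crosses T.
Proof.
split=> [eqST e|eqST]; last by apply: functional_extensionality => e; rewrite !cutvecE eqST.
have /eqP := congr1 (fun v => v e) eqST.
by rewrite !cutvecE eqr_nat; case: (crosses S e); case: (crosses T e).
Qed.

Lemma edge_ends e : exists p q, [/\ p != q, adj p q & val e = [set p; q]].
Proof. by have /existsP[p /existsP[q /and3P[pq pq_adj /eqP eE]]] := valP e; exists p, q. Qed.

Lemma crosses_ends S e p q : p != q -> val e = [set p; q] ->
  crosses S e = ((p \in S) != (q \in S)).
Proof. by move=> pq eE; rewrite /crosses eE card_set2I //; case: (p \in S); case: (q \in S). Qed.

Lemma is_edge_set2 p q : p != q -> adj p q -> is_edge adj [set p; q].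
Proof.
by move=> pq pq_adj; apply/existsP; exists p; apply/existsP; exists q; rewrite pq pq_adj eqxx.
Qed.

Definition edge_of p q (pq : p != q) (pq_adj : adj p q) : E :=
  exist _ [set p; q] (is_edge_set2 pq pq_adj).

Lemma crosses_edge_of S p q (pq : p != q) (pq_adj : adj p q) :
  crosses S (edge_of pq pq_adj) = ((p \in S) != (q \in S)).
Proof. exact: crosses_ends. Qed.

Lemma crosses_symdiff S T e : crosses (symdiff S T) e = crosses S e (+) crosses T e.
Proof.
have [p [q [pq _ eE]]] := edge_ends e; rewrite !(crosses_ends _ pq eE) !in_symdiff.
by case: (p \in S); case: (q \in S); case: (p \in T); case: (q \in T).
Qed.

(* Cut-based connectivity of the induced subgraph [G[X]]: no edge of [G[X]]
   leaves [Y] means that [X] lies on one side of [Y]. *)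
Definition induced_connected X : Prop :=
  forall Y, {in X &, forall p q, adj p q -> (p \in Y) = (q \in Y)} ->
            {in X &, forall p q, (p \in Y) = (q \in Y)}.

Definition agree_weight (F : pred E) S e : R := if F e then 2 * cv S e - 1 else 0.

Lemma agree_weight_leif F S X :
  dotp (agree_weight F S) (cv X) <= \sum_(e | F e) cv S e
    ?= iff [forall e, F e ==> (crosses X e == crosses S e)].
Proof.
rewrite /dotp [X in _ <= X ?= iff _]big_mkcond /=; apply: leif_sum => e _.
rewrite /agree_weight !cutvecE.
case: (F e); case: (crosses X e); case: (crosses S e); apply/leifP => /=;
  rewrite ?mulr1 ?mulr0 ?mul0r ?eqxx //.
- by apply/eqP; lra.
- lra.
Qed.

Lemma agree_weight_self F S : dotp (agree_weight F S) (cv S) = \sum_(e | F e) cv S e.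
Proof. by apply/eqP; rewrite (agree_weight_leif F S S).2; apply/forall_inP => e _. Qed.

Lemma agree_weight_tight F S X : dotp (agree_weight F S) (cv X) = \sum_(e | F e) cv S e ->
  forall e, F e -> crosses X e = crosses S e.
Proof. by move/eqP; rewrite (agree_weight_leif F S X).2 => /forall_inP agree e /agree/eqP. Qed.

Lemma cutvec_is_vertex S : is_vertex (CUT adj R) (cv S).
Proof.
have valid X := (agree_weight_leif predT S X).1.
apply: (is_vertex_conv valid) => [|X /agree_weight_tight agree]; first exact: agree_weight_self.
by apply/cutvec_eqP => e; apply: agree.
Qed.

Lemma crosses_off_cut U S X : induced_connected U -> induced_connected (~: U) ->
  (forall e, ~~ crosses U e -> crosses X e = crosses S e) ->
  crosses X =1 crosses S \/ crosses X =1 crosses (symdiff S U).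
Proof.
move=> connU connCU agree; pose Y := symdiff X S.
have XE e : crosses X e = crosses S e (+) crosses Y e.
  by rewrite crosses_symdiff; case: (crosses X e); case: (crosses S e).
have Y_adj p q : adj p q -> (p \in U) = (q \in U) -> (p \in Y) = (q \in Y).
  have [-> //|pq pq_adj pqU] := eqVneq p q.
  have := agree (edge_of pq pq_adj); rewrite !crosses_edge_of pqU eqxx !in_symdiff.
  by move=> /(_ isT); case: (p \in X); case: (q \in X); case: (p \in S); case: (q \in S).
have sideY p q : (p \in U) = (q \in U) -> (p \in Y) = (q \in Y).
  case pU: (p \in U) => qU.
    by apply: (connU Y) => // p' q' p'U q'U /Y_adj; apply; rewrite p'U q'U.
  apply: (connCU Y); last 2 first; [by rewrite inE pU | by rewrite inE -qU |].
  move=> p' q' /[!in_setC] p'U q'U /Y_adj; apply.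
  by rewrite (negbTE p'U) (negbTE q'U).
have [constY|YU] := sides_constant sideY; [left|right] => e;
  have [p [q [pq _ eE]]] := edge_ends e.
  by rewrite XE (crosses_ends Y pq eE) (constY p q) eqxx addbF.
by rewrite XE crosses_symdiff (crosses_ends Y pq eE) (crosses_ends U pq eE) YU.
Qed.

Lemma cutvec_adjacent S T :
  induced_connected (symdiff S T) -> induced_connected (~: symdiff S T) ->
  skel_within (CUT adj R) 1 (cv S) (cv T).
Proof.
set U := symdiff S T => connU connCU.
have TE : T = symdiff S U by rewrite symdiffKl.
case: (boolP [forall e, crosses S e == crosses T e]) => [/forallP eqST|neqST].
  by left; apply/cutvec_eqP => e; apply/eqP: (eqST e).
right; exists (cv S); split=> //.
split; first exact: cutvec_is_vertex.
split; first exact: cutvec_is_vertex.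
split.
  by move/cutvec_eqP => eqST; case/forallP: neqST => e; rewrite eqST.
pose F := [pred e | ~~ crosses U e].
have valid X := (agree_weight_leif F S X).1.
apply: (is_face_segment_conv valid) => [||X /agree_weight_tight agree].
- exact: agree_weight_self.
- apply/eqP; rewrite (agree_weight_leif F S T).2; apply/forall_inP => e /negbTE Ue.
  by rewrite TE crosses_symdiff Ue addbF.
- rewrite TE !cutvec_eqP; exact: crosses_off_cut.
Qed.

Lemma cutvec_not_adjacent (V0 : {set V}) a b y : {in V0 &, forall p q, ~~ adj p q} ->
  a \in V0 -> b \in V0 -> a != b -> y \notin V0 -> adj a y -> adj b y ->
  ~ skel_adj (CUT adj R) (cv set0) (cv V0).
Proof.
move=> indep aV0 bV0 ab yV0 ay b_y [_ [_ [_ face]]].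
have a_neq_y : a != y by apply: contraNneq yV0 => <-.
have b_neq_y : b != y by apply: contraNneq yV0 => <-.
have sumE e : cv set0 e + cv V0 e = cv [set a] e + cv (V0 :\ a) e.
  rewrite !cutvecE -!natrD; congr (_%:R).
  have [p [q [pq pq_adj eE]]] := edge_ends e; rewrite !(crosses_ends _ pq eE) !inE.
  have pV0 : (p == a) ==> (p \in V0) by apply/implyP => /eqP->.
  have qV0 : (q == a) ==> (q \in V0) by apply/implyP => /eqP->.
  have : ~~ ((p \in V0) && (q \in V0)) by apply/andP => -[/indep/[apply]]; rewrite pq_adj.
  by move: pV0 qV0; case: (p == a); case: (q == a); case: (p \in V0); case: (q \in V0).
have := face_sum_closed face (conv_point _ [set a]) (conv_point _ (V0 :\ a))
  (segment_left _ _) (segment_right _ _) (fun e => esym (sumE e)).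
case=> t [_ tE]; move: (tE (edge_of a_neq_y ay)) (tE (edge_of b_neq_y b_y)).
rewrite !cutvecE !crosses_edge_of !inE eqxx [b == a]eq_sym (negbTE ab).
by rewrite [y == a]eq_sym (negbTE a_neq_y) (negbTE yV0) aV0 bV0 /=; lra.
Qed.

End CutVectors.

Section CompleteMultipartite.
Variables (k : nat) (n : 'I_k -> nat) (R : realType).
Local Notation V := (mpvert n).
Local Notation adj := (multipartite k n).
Local Notation cv S := (@cutvec V adj R S).
Implicit Types (A S T U X : {set V}).

Definition meets_two_parts X : bool := [exists p in X, exists q in X, tag p != tag q].

(* In a complete multipartite graph these are exactly the connected induced
   subgraphs. *)
Definition mp_connected X : bool := meets_two_parts X || (#|X| <= 1)%N.

Lemma mp_connectedW X p q : p \in X -> q \in X -> tag p != tag q -> mp_connected X.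
Proof.
by move=> pX qX pq; apply/orP; left; apply/exists_inP; exists p => //; apply/exists_inP; exists q.
Qed.

Lemma mp_connected_induced X : mp_connected X -> induced_connected adj X.
Proof.
case/orP=> [/exists_inP[p0 p0X /exists_inP[q0 q0X p0q0]]|/card_le1_eqP X_le1] Y Yadj;
  last by move=> p q pX qX; rewrite (X_le1 p q pX qX).
have toP0 r : r \in X -> (r \in Y) = (p0 \in Y).
  move=> rX; have [rp0|rp0] := eqVneq (tag r) (tag p0); last exact: Yadj.
  by rewrite (Yadj r q0) ?(Yadj p0 q0) // /multipartite rp0.
by move=> p q pX qX; rewrite !toP0.
Qed.

Hypothesis k_ge2 : (2 <= k)%N.
Hypothesis n_ge2 : forall i, (2 <= n i)%N.

Lemma exists_other_part (i : 'I_k) : exists j, j != i.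
Proof.
have k_gt0 : (0 < k)%N by apply: leq_trans k_ge2.
have [->|i_neq0] := eqVneq i (Ordinal k_gt0); last by exists (Ordinal k_gt0); rewrite eq_sym.
by exists (Ordinal k_ge2).
Qed.

Lemma exists_two_in_part j : exists y y' : V, [/\ tag y = j, tag y' = j & y != y'].
Proof.
have n_gt0 : (0 < n j)%N by apply: leq_trans (n_ge2 j).
exists (Tagged (fun i => 'I_(n i)) (Ordinal n_gt0)),
       (Tagged (fun i => 'I_(n i)) (Ordinal (n_ge2 j))).
by split=> //; apply/eqP => /(congr1 (fun z : V => nat_of_ord (tagged z))).
Qed.

(* A disconnected [X] lies in a single part; [A] pairs a vertex [x] of [X]
   with a vertex [y] of another part, leaving enough of [X] and of that part
   on each of the four sides. *)
Lemma mp_bridge X : ~~ mp_connected X -> exists A,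
  [&& mp_connected A, mp_connected (~: A), mp_connected (symdiff A X)
    & mp_connected (~: symdiff A X)].
Proof.
rewrite negb_or -ltnNge => /andP[notX /card_gt1P[x [x' [xX x'X xx']]]].
have tagX r : r \in X -> tag r = tag x.
  move=> rX; apply/eqP; apply: contraNT notX => rx.
  by apply/exists_inP; exists r => //; apply/exists_inP; exists x.
have [j jx] := exists_other_part (tag x).
have [y [y' [yj y'j yy']]] := exists_two_in_part j.
have yX : y \notin X by apply: contra jx => /tagX; rewrite yj => ->.
have y'X : y' \notin X by apply: contra jx => /tagX; rewrite y'j => ->.
have xj : tag x != tag y by rewrite yj eq_sym.
have x'j : tag x' != tag y' by rewrite (tagX x' x'X) y'j eq_sym.
have x'A : x' \notin [set x; y].
  rewrite !inE eq_sym (negbTE xx') /=.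
  by apply: contraNneq x'j => ->; rewrite yj y'j.
have y'A : y' \notin [set x; y].
  rewrite !inE [y' == y]eq_sym (negbTE yy') orbF.
  by apply: contraNneq xj => <-; rewrite yj y'j.
exists [set x; y]; apply/and4P; split.
- by apply: (mp_connectedW (p := x) (q := y)); rewrite ?set21 ?set22.
- by apply: (mp_connectedW (p := x') (q := y')); rewrite ?in_setC.
- apply: (mp_connectedW (p := x') (q := y)).
  + by rewrite in_symdiff (negbTE x'A) x'X.
  + by rewrite in_symdiff set22 (negbTE yX).
  + by rewrite (tagX x' x'X).
- apply: (mp_connectedW (p := x) (q := y')).
  + by rewrite in_setC in_symdiff set21 xX.
  + by rewrite in_setC in_symdiff (negbTE y'A) (negbTE y'X).
  + by rewrite y'j eq_sym.
Qed.

Lemma cutvec_within2 S T : skel_within (CUT adj R) 2 (cv S) (cv T).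
Proof.
set U := symdiff S T.
have [/andP[connU connCU]|] := boolP (mp_connected U && mp_connected (~: U)).
  by left; apply: cutvec_adjacent; apply: mp_connected_induced.
move=> /nandP notU.
have [X notX UX] : exists2 X, ~~ mp_connected X & U = X \/ U = ~: X.
  by case: notU => notU; [exists U; [|left] | exists (~: U); [|right; rewrite setCK]].
have [A /and4P[cA cCA cAX cCAX]] := mp_bridge notX.
have [cAU cCAU] : mp_connected (symdiff A U) /\ mp_connected (~: symdiff A U).
  by case: UX => ->; rewrite ?symdiff_setCr ?setCK.
apply: (@skel_within1_trans _ _ _ _ (cv (symdiff S A))); apply: cutvec_adjacent;
  apply: mp_connected_induced; rewrite ?symdiffKl //.
all: by rewrite (symdiffC S A) -symdiffA.
Qed.

Lemma cutvec_part_not_adjacent : exists S T,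
  cv S <> cv T /\ ~ skel_adj (CUT adj R) (cv S) (cv T).
Proof.
pose i0 : 'I_k := Ordinal k_ge2.
have [i1 i10] := exists_other_part i0.
have [a [b [ai0 bi0 ab]]] := exists_two_in_part i0.
have [y [_ [yi1 _ _]]] := exists_two_in_part i1.
pose V0 := [set r : V | tag r == i0].
have yV0 : y \notin V0 by rewrite inE yi1.
have ay : adj a y by rewrite /multipartite ai0 yi1 eq_sym.
have a_neq_y : a != y by apply: contraNneq yV0 => <-; rewrite inE ai0.
exists set0, V0; split.
  move/cutvec_eqP/(_ (edge_of a_neq_y ay)).
  by rewrite !crosses_edge_of !inE ai0 yi1 eqxx (negbTE i10).
apply: (cutvec_not_adjacent (a := a) (b := b) (y := y)) => //.
- by move=> p q /[!inE] /eqP pi0 /eqP qi0; rewrite /multipartite pi0 qi0 eqxx.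
- by rewrite inE ai0.
- by rewrite inE bi0.
- by rewrite /multipartite bi0 yi1 eq_sym.
Qed.

End CompleteMultipartite.

Theorem theorem11 (R : realType) (k : nat) (n : 'I_k -> nat) :
  (2 <= k)%N -> (forall i, (2 <= n i)%N) ->
  skeleton_diameter (CUT (multipartite k n) R) 2.
Proof.
move=> k_ge2 n_ge2; split.
  by move=> u v /vertex_conv_image[S ->] /vertex_conv_image[T ->]; apply: cutvec_within2.
have [S [T [ST notST]]] := cutvec_part_not_adjacent R k_ge2 n_ge2.
exists (cutvec R S), (cutvec R T); do 2 (split; first exact: cutvec_is_vertex).
by case=> [|[|m]] // _ [|[w [<-]]].
Qed.
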